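(* Let $\mathcal H$ be a connected $As^c$-$Mag$-bialgebra and $e=\mathrm{id}+\sum_{n\ge1}(-1)^n\omega^{n+1}\circ\delta^n:\bar{\mathcal H}\to\bar{\mathcal H}$. Then for every $x\in\bar{\mathcal H}$, $$x=e(x)+\omega_r^2\big((e\otimes e)(\delta^1(x))\big)+\dots+\omega_r^{n+1}\big(e^{\otimes(n+1)}(\delta^n(x))\big)+\cdots,$$ the sum being finite.
   Context: An $As^c$-$Mag$-bialgebra is a vector space $\mathcal H$ over a field with a bilinear product $\cdot$ (not assumed associative) with two-sided unit $1$ and a coassociative counital coproduct $\Delta$ with $\Delta(1)=1\otimes1$ and $\Delta(x\cdot y)=\Delta(x)\cdot(1\otimes y)+(x\otimes1)\cdot\Delta(y)-x\otimes y$, the product on $\mathcal H\otimes\mathcal H$ being componentwise. $\bar{\mathcal H}$ = kernel of the counit; $\delta(x)=\Delta(x)-x\otimes1-1\otimes x$ on $\bar{\mathcal H}$; $\delta^1=\delta$, $\delta^n=(\delta\otimes\mathrm{id}^{\otimes(n-1)})\circ\delta^{n-1}$. Connected means: for each $x\in\bar{\mathcal H}$, $\delta^n(x)=0$ for $n$ large. $\omega^m$ is the left comb ($\omega^1(x)=x$, $\omega^m(x_1,\dots,x_m)=\omega^{m-1}(x_1,\dots,x_{m-1})\cdot x_m$) and $\omega_r^m$ the right comb ($\omega_r^1(x)=x$, $\omega_r^m(x_1,\dots,x_m)=x_1\cdot\omega_r^{m-1}(x_2,\dots,x_m)$), applied to the tensor factors of an element of $\bar{\mathcal H}^{\otimes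 m}$. *)

(* Tensor powers H^{(x)n} of a K-vector space H are modelled
   as formal finite sums of simple tensors (elements of [tens H n]), two
   formal sums being identified ([teq]) iff every multilinear map out of
   H^n (into any K-vector space) takes the same value on them: this is the
   universal property defining the tensor product. *)
From HB Require Import structures.
From mathcomp Require Import all_boot all_order all_algebra.
Set Implicit Arguments. Unset Strict Implicit. Unset Printing Implicit Defensive.
Import GRing.Theory.
Local Open Scope ring_scope.

Definition tens (K : fieldType) (H : lmodType K) (n : nat) :=
  seq (K * n.-tuple H).

Definition tev (K : fieldType) (H V : lmodType K) (n : nat)
  (f : n.-tuple H -> V) (t : tens H n) : V :=
  \sum_(p <- t) p.1 *: f p.2.

Definition tupset (T : Type) (n : nat) (t : n.-tuple T) (i : 'I_n) (u : T)
  : n.-tuple T := [tuple if j == i then u else tnth t j | j < n].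

Definition multilinear (K : fieldType) (H V : lmodType K) (n : nat)
  (f : n.-tuple H -> V) : Prop :=
  forall (t : n.-tuple H) (i : 'I_n) (a : K) (u v : H),
    f (tupset t i (a *: u + v)) = a *: f (tupset t i u) + f (tupset t i v).

Definition teq (K : fieldType) (H : lmodType K) (n : nat) (t s : tens H n)
  : Prop :=
  forall (V : lmodType K) (f : n.-tuple H -> V), multilinear f ->
    tev f t = tev f s.

Definition tscale (K : fieldType) (H : lmodType K) (n : nat) (a : K)
  (t : tens H n) : tens H n := [seq (a * p.1, p.2) | p <- t].

(* (g (x) id^{(x)n}) applied to t, for g : H -> H^{(x)m} *)
Definition tmap_first (K : fieldType) (H : lmodType K) (m n : nat)
  (g : H -> tens H m) (t : tens H n.+1) : tens H (m + n) :=
  flatten [seq [seq (p.1 * q.1, cat_tuple q.2 (behead_tuple p.2))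
               | q <- g (thead p.2)] | p <- t].

(* (id (x) g) applied to a 2-tensor t *)
Definition tmap_second (K : fieldType) (H : lmodType K) (m : nat)
  (g : H -> tens H m) (t : tens H 2) : tens H (1 + m) :=
  flatten [seq [seq (p.1 * q.1, cat_tuple [tuple tnth p.2 ord0] q.2)
               | q <- g (tnth p.2 ord_max)] | p <- t].

Definition tmapall (K : fieldType) (H : lmodType K) (n : nat)
  (g : H -> H) (t : tens H n) : tens H n :=
  [seq (p.1, map_tuple g p.2) | p <- t].

Definition AscMag_bialgebra (K : fieldType) (H : lmodType K)
  (mul : H -> H -> H) (one : H) (Delta : H -> tens H 2) (eps : H -> K)
  : Prop :=
  (forall (a : K) (x y z : H), mul (a *: x + y) z = a *: mul x z + mul y z) /\
  (forall (a : K) (x y z : H), mul z (a *: x + y) = a *: mul z x + mul z y) /\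
  (forall x, mul one x = x) /\ (forall x, mul x one = x) /\
  (forall (a : K) (x y : H),
      teq (Delta (a *: x + y)) (tscale a (Delta x) ++ Delta y)) /\
  (forall x, teq (tmap_first Delta (Delta x)) (tmap_second Delta (Delta x))) /\
  (forall (a : K) (x y : H), eps (a *: x + y) = a * eps x + eps y) /\
  (forall x, tev (fun p : 2.-tuple H => eps (tnth p ord0) *: tnth p ord_max)
                 (Delta x) = x) /\
  (forall x, tev (fun p : 2.-tuple H => eps (tnth p ord_max) *: tnth p ord0)
                 (Delta x) = x) /\
  teq (Delta one) [:: (1, [tuple one; one])] /\
  (* Delta(x.y) = Delta(x).(1 (x) y) + (x (x) 1).Delta(y) - x (x) y *)
  (forall x y, teq (Delta (mul x y))
     ([seq (p.1, [tuple mul (tnth p.2 ord0) one; mul (tnth p.2 ord_max) y])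
        | p <- Delta x] ++
      [seq (p.1, [tuple mul x (tnth p.2 ord0); mul one (tnth p.2 ord_max)])
        | p <- Delta y] ++
      [:: (-1, [tuple x; y])])).

Definition rdelta (K : fieldType) (H : lmodType K) (one : H)
  (Delta : H -> tens H 2) (x : H) : tens H 2 :=
  Delta x ++ [:: (-1, [tuple x; one]); (-1, [tuple one; x])].

Fixpoint deltan (K : fieldType) (H : lmodType K) (one : H)
  (Delta : H -> tens H 2) (n : nat) (x : H) : tens H n.+1 :=
  match n with
  | 0 => [:: (1, [tuple x])]
  | n'.+1 => tmap_first (rdelta one Delta) (deltan one Delta n' x)
  end.

Definition omega_l (K : fieldType) (H : lmodType K) (mul : H -> H -> H)
  (n : nat) (t : n.+1.-tuple H) : H := foldl mul (thead t) (behead t).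

Fixpoint combr (H : Type) (mul : H -> H -> H) (x : H) (s : seq H) : H :=
  match s with
  | [::] => x
  | y :: s' => mul x (combr mul y s')
  end.

Definition omega_r (K : fieldType) (H : lmodType K) (mul : H -> H -> H)
  (n : nat) (t : n.+1.-tuple H) : H := combr mul (thead t) (behead t).

Definition connected (K : fieldType) (H : lmodType K) (one : H)
  (Delta : H -> tens H 2) (eps : H -> K) : Prop :=
  forall x, eps x = 0 ->
    exists N, forall n, (N <= n)%N -> teq (deltan one Delta n x) [::].

(* e : ker eps -> ker eps,  e = id + sum_{n>=1} (-1)^n omega^{n+1} o delta^n;
   the sum is finite on each x by connectedness, so e(x) is the eventual
   value of the partial sums. *)
Definition is_e (K : fieldType) (H : lmodType K) (mul : H -> H -> H) (one : H)
  (Delta : H -> tens H 2) (eps : H -> K) (e : H -> H) : Prop :=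
  forall x, eps x = 0 ->
    exists N, forall M, (N <= M)%N ->
      e x = x + \sum_(1 <= n < M.+1)
                  (-1) ^+ n *: tev (@omega_l K H mul n) (deltan one Delta n x).

(* Write e'(y) = e(y - eps(y) 1) and let R(y_1 (x) ... (x) y_m) be the right comb
   e'(y_1) . (e'(y_2) . ( ... . y_m)), with e' applied to every factor but the last.
   Since omega^{n+2} = mul o (omega^{n+1} (x) id) and delta^{n+1} = (delta^n (x) id) o delta,
   the series defining e gives the recursion  z = e(z) + mul((e' (x) id)(delta z))  on
   ker eps.  Applying it to the last factor of delta^N(x), and using coassociativity in
   the form delta^{N+1} = (id^{(x)N} (x) delta) o delta^N and the counit to kill the
   terms with a factor 1, yields
     R(delta^N x) = omega_r^{N+1}(e'^{(x)(N+1)}(delta^N x)) + R(delta^{N+1} x).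
   Telescoping from R(delta^0 x) = x and connectedness give the finite expansion. *)

From HB Require Import structures.
From mathcomp Require Import all_boot all_order all_algebra zify.
Import GRing.Theory.
Local Open Scope ring_scope.
Set Implicit Arguments. Unset Strict Implicit.

Lemma tupsetE (T : Type) (x0 : T) n (t : n.-tuple T) (i : 'I_n) (w : T) :
  val (tupset t i w) = take i t ++ w :: drop i.+1 t.
Proof.
apply: (@eq_from_nth _ x0) => [|k].
  rewrite size_tuple size_cat /= size_take size_drop size_tuple ltn_ord.
  by have := ltn_ord i; lia.
rewrite size_tuple => kn; rewrite -[k]/(val (Ordinal kn)) -tnth_nth.
rewrite tnth_map tnth_ord_tuple nth_cat size_take size_tuple ltn_ord.
case: eqP => [<-|/eqP]; first by rewrite ltnn subnn.
rewrite -val_eqE /= neq_ltn (tnth_nth x0) /= => /orP[ki|ik]; first by rewrite ki nth_take.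
by rewrite ltnNge ltnW //= -(subnSK ik) /= nth_drop subnKC.
Qed.

Lemma size2E (T : Type) (x0 : T) (s : seq T) : size s = 2 -> s = [:: nth x0 s 0; nth x0 s 1].
Proof. by case: s => [|a [|b []]]. Qed.

Lemma eventually_in (T : eqType) (s : seq T) (Q : T -> nat -> Prop) :
  {in s, forall p, exists N, forall M, (N <= M)%N -> Q p M} ->
  exists N, {in s, forall p M, (N <= M)%N -> Q p M}.
Proof.
elim: s => [|a s IH] evQ; first by exists 0%N.
have [Na QaM] := evQ a (mem_head a s).
have [Ns QsM] : exists N, {in s, forall p M, (N <= M)%N -> Q p M}.
  by apply: IH => p ps; apply: evQ; rewrite in_cons ps orbT.
exists (maxn Na Ns) => p; rewrite in_cons => /predU1P[-> | ps] M.
  by rewrite geq_max => /andP[/QaM].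
by rewrite geq_max => /andP[_ /QsM]; apply.
Qed.

Section LinearFunctions.
Variables (K : fieldType) (U : lmodType K) (W : zmodType) (s : GRing.Scale.law K W).
Variable (L : U -> W).
Hypothesis linL : linear_for s L.
Let L' : {linear U -> W | s} := HB.pack L (GRing.isLinear.Build K U W s L linL).
Lemma lin0 : L 0 = 0. Proof. exact: (linear0 L'). Qed.
Lemma linD x y : L (x + y) = L x + L y. Proof. exact: (linearD L'). Qed.
Lemma linZ a x : L (a *: x) = s a (L x). Proof. exact: (linearZ_LR L'). Qed.
Lemma linB x y : L (x - y) = L x - L y. Proof. exact: (linearB L'). Qed.
Lemma lin_sum I (r : seq I) (F : I -> U) : L (\sum_(i <- r) F i) = \sum_(i <- r) L (F i).
Proof. exact: (linear_sum L'). Qed.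
End LinearFunctions.

Lemma linear_sub (K : fieldType) (U W : lmodType K) (f g : U -> W) :
  linear f -> linear g -> linear (fun x => f x - g x).
Proof. by move=> linf ling a u v; rewrite linf ling scalerBr opprD addrACA. Qed.

(** * Evaluation of formal tensors *)

Section TensorEvaluation.
Variables (K : fieldType) (H V : lmodType K).

(* [tev] for functions of lists rather than of tuples, so that factors can be split off
   with [++]. *)
Definition teval n (F : seq H -> V) (t : tens H n) : V := \sum_(p <- t) p.1 *: F p.2.

Definition mlinear n (F : seq H -> V) : Prop :=
  forall s1 s2 : seq H, (size s1 + (size s2).+1 = n)%N ->
    linear (fun u => F (s1 ++ u :: s2)).

Implicit Types (n m : nat) (F G : seq H -> V).

Lemma tev_teval n (f : n.-tuple H -> V) (F : seq H -> V) (t : tens H n) :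
  (forall u : n.-tuple H, f u = F u) -> tev f t = teval F t.
Proof. by move=> eqfF; apply: eq_bigr => p _; rewrite eqfF. Qed.

Lemma teval_nil n F : teval F ([::] : tens H n) = 0.
Proof. by rewrite /teval big_nil. Qed.

Lemma teval_cons n F p (t : tens H n) : teval F (p :: t) = p.1 *: F p.2 + teval F t.
Proof. by rewrite /teval big_cons. Qed.

Lemma teval_cat n F (t1 t2 : tens H n) : teval F (t1 ++ t2) = teval F t1 + teval F t2.
Proof. by rewrite /teval big_cat. Qed.

Lemma teval_tscale n F a (t : tens H n) : teval F (tscale a t) = a *: teval F t.
Proof.
by rewrite /teval big_map scaler_sumr; apply: eq_bigr => p _; rewrite scalerA.
Qed.

Lemma eq_teval n F G (t : tens H n) :
  (forall s, size s = n -> F s = G s) -> teval F t = teval G t.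
Proof. by move=> eqFG; apply: eq_bigr => p _; rewrite eqFG ?size_tuple. Qed.

Lemma eq_in_teval n F G (t : tens H n) :
  {in t, forall p : K * n.-tuple H, F p.2 = G p.2} -> teval F t = teval G t.
Proof. by move=> eqFG; apply: eq_big_seq => p /eqFG ->. Qed.

Lemma tevalD n F G (t : tens H n) :
  teval (fun s => F s + G s) t = teval F t + teval G t.
Proof. by rewrite /teval -big_split; apply: eq_bigr => p _; rewrite scalerDr. Qed.

Lemma tevalZ n F a (t : tens H n) : teval (fun s => a *: F s) t = a *: teval F t.
Proof.
by rewrite /teval scaler_sumr; apply: eq_bigr => p _; rewrite !scalerA mulrC.
Qed.

Lemma tevalN n F (t : tens H n) : teval (fun s => - F s) t = - teval F t.
Proof. by rewrite /teval -sumrN; apply: eq_bigr => p _; rewrite scalerN. Qed.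

Lemma tevalB n F G (t : tens H n) :
  teval (fun s => F s - G s) t = teval F t - teval G t.
Proof. by rewrite tevalD tevalN. Qed.

Lemma teval_sum n I (r : seq I) (F : I -> seq H -> V) (t : tens H n) :
  teval (fun s => \sum_(i <- r) F i s) t = \sum_(i <- r) teval (F i) t.
Proof. by rewrite /teval exchange_big; apply: eq_bigr => p _; rewrite scaler_sumr. Qed.

Lemma teval_exchange n m (F : seq H -> seq H -> V) (t1 : tens H n) (t2 : tens H m) :
  teval (fun s1 => teval (F s1) t2) t1 = teval (fun s2 => teval (F^~ s2) t1) t2.
Proof.
rewrite /teval; under eq_bigr do rewrite scaler_sumr.
rewrite exchange_big; apply: eq_bigr => q _; rewrite scaler_sumr.
by apply: eq_bigr => p _; rewrite !scalerA mulrC.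
Qed.

Lemma teq_teval n F (t t' : tens H n) : mlinear n F -> teq t t' -> teval F t = teval F t'.
Proof.
move=> linF eqt; apply: (eqt V (fun tup => F (val tup))) => tup i a u v.
rewrite !(tupsetE 0); apply: linF.
by rewrite size_take size_drop size_tuple ltn_ord; have := ltn_ord i; lia.
Qed.

Lemma mlinear_catr n (w : seq H) F : mlinear (n + size w) F -> mlinear n (fun s => F (s ++ w)).
Proof.
move=> linF s1 s2 sz a u v /=; rewrite -!catA !cat_cons; apply: linF.
by rewrite size_cat -sz; lia.
Qed.

Lemma mlinear_catl n (w : seq H) F : mlinear (size w + n) F -> mlinear n (fun s => F (w ++ s)).
Proof.
move=> linF s1 s2 sz a u v /=; rewrite !catA; apply: linF.
by rewrite size_cat -sz; lia.
Qed.

Lemma mlinear2 F :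
  (forall b, linear (fun u => F [:: u; b])) -> (forall b, linear (fun u => F [:: b; u])) ->
  mlinear 2 F.
Proof.
by move=> lin1 lin2 [|u [|? ?]] [|w [|? ?]] /= sz; try lia; [apply: lin1 | apply: lin2].
Qed.

Lemma teval_tmap_first m n (g : H -> tens H m) F (t : tens H n.+1) :
  teval F (tmap_first g t) =
  teval (fun s => teval (fun q => F (q ++ behead s)) (g (head 0 s))) t.
Proof.
rewrite /teval /tmap_first big_flatten /= big_map; apply: eq_bigr => p _.
rewrite big_map scaler_sumr /thead (tnth_nth 0) nth0.
by apply: eq_bigr => q _; rewrite scalerA.
Qed.

Lemma teval_tmap_second m (g : H -> tens H m) F (t : tens H 2) :
  teval F (tmap_second g t) =
  teval (fun s => teval (fun q => F (nth 0 s 0 :: q)) (g (nth 0 s 1))) t.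
Proof.
rewrite /teval /tmap_second big_flatten /= big_map; apply: eq_bigr => p _.
by rewrite big_map scaler_sumr !(tnth_nth 0); apply: eq_bigr => q _; rewrite scalerA.
Qed.

Lemma teval_tmapall n (g : H -> H) F (t : tens H n) :
  teval F (tmapall g t) = teval (fun s => F (map g s)) t.
Proof. by rewrite /teval /tmapall big_map. Qed.

End TensorEvaluation.

Lemma linear_teval (K : fieldType) (H V W : lmodType K) n (L : V -> W)
    (F : seq H -> V) (t : tens H n) :
  linear L -> L (teval F t) = teval (fun s => L (F s)) t.
Proof.
by move=> linL; rewrite /teval (lin_sum linL); apply: eq_bigr => p _; rewrite (linZ linL).
Qed.

(* Formal sums are only equal up to [teq], so linearity of [g : H -> H^{(x)m}] is tested
   against every multilinear map. *)
Definition tlinear (K : fieldType) (H : lmodType K) m (g : H -> tens H m) : Prop :=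
  forall (V : lmodType K) (F : seq H -> V), mlinear m F -> linear (fun x => teval F (g x)).

Lemma mlinear_tmap_first (K : fieldType) (H V : lmodType K) m n (g : H -> tens H m)
    (F : seq H -> V) :
  tlinear g -> mlinear (m + n) F ->
  mlinear n.+1 (fun s => teval (fun q => F (q ++ behead s)) (g (head 0 s))).
Proof.
move=> ling linF [|h s1] s2 /= sz a u v.
  by apply: ling; apply: mlinear_catr; rewrite (_ : size s2 = n) //; lia.
rewrite -tevalZ -tevalD; apply: eq_teval => q szq; rewrite !catA; apply: linF.
by rewrite size_cat szq; lia.
Qed.

Section Bialgebra.
Variables (K : fieldType) (H : lmodType K) (mul : H -> H -> H) (one : H)
  (Delta : H -> tens H 2) (eps : H -> K).
Hypothesis mul_linl : forall z, linear (mul^~ z).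
Hypothesis mul_linr : forall z, linear (mul z).
Hypothesis Delta_linear : forall a x y,
  teq (Delta (a *: x + y)) (tscale a (Delta x) ++ Delta y).
Hypothesis Delta_coassoc : forall x,
  teq (tmap_first Delta (Delta x)) (tmap_second Delta (Delta x)).
Hypothesis eps_scalar : scalar eps.
Hypothesis counitl : forall x, teval (fun s => eps (nth 0 s 0) *: nth 0 s 1) (Delta x) = x.
Hypothesis counitr : forall x, teval (fun s => eps (nth 0 s 1) *: nth 0 s 0) (Delta x) = x.
Hypothesis Delta_one : teq (Delta one) [:: (1, [tuple one; one])].

Local Notation rdelta := (rdelta one Delta).
Local Notation deltan := (deltan one Delta).

Implicit Types (F G : seq H -> H).

Lemma teval_Delta_one F : mlinear 2 F -> teval F (Delta one) = F [:: one; one].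
Proof. by move=> linF; rewrite (teq_teval linF Delta_one) teval_cons teval_nil addr0 scale1r. Qed.

Lemma counit_one : one != 0 -> eps one = 1.
Proof.
move=> one_neq0; have linF : mlinear 2 (fun s => eps (nth 0 s 0) *: nth 0 s 1).
  apply: mlinear2 => b a u v /=.
    by rewrite (linD eps_scalar) (linZ eps_scalar) scalerDl scalerA.
  by rewrite scalerDr !scalerA mulrC.
have := counitl one; rewrite teval_Delta_one //= => /eqP.
by rewrite -subr_eq0 -{3}[one]scale1r -scalerBl scaler_eq0 (negPf one_neq0) orbF subr_eq0 => /eqP.
Qed.

Lemma teval_rdelta (V : lmodType K) (F : seq H -> V) z :
  teval F (rdelta z) = teval F (Delta z) - F [:: z; one] - F [:: one; z].
Proof. by rewrite teval_cat !teval_cons teval_nil addr0 !scaleN1r addrA. Qed.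

Lemma teval_rdelta_one F : mlinear 2 F -> teval F (rdelta one) = - F [:: one; one].
Proof. by move=> linF; rewrite teval_rdelta teval_Delta_one // subrr add0r. Qed.

Lemma Delta_tlinear : tlinear Delta.
Proof.
move=> V F linF a x y /=.
by rewrite (teq_teval linF (Delta_linear a x y)) teval_cat teval_tscale.
Qed.

Lemma rdelta_tlinear : tlinear rdelta.
Proof.
move=> V F linF a x y; rewrite !teval_rdelta.
exact: (linear_sub (linear_sub (Delta_tlinear linF) (linF [::] [:: one] erefl))
                   (linF [:: one] [::] erefl)).
Qed.

Lemma teval_deltan0 (V : lmodType K) (F : seq H -> V) x : teval F (deltan 0 x) = F [:: x].
Proof. by rewrite teval_cons teval_nil addr0 scale1r. Qed.

Lemma teval_deltanS (V : lmodType K) n (F : seq H -> V) x :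
  teval F (deltan n.+1 x) =
  teval (fun s => teval (fun q => F (q ++ behead s)) (rdelta (head 0 s))) (deltan n x).
Proof. exact: (teval_tmap_first (m := 2)). Qed.

Lemma deltan_tlinear n : tlinear (deltan n).
Proof.
elim: n => [|n IH] V F linF a x y; first by rewrite !teval_deltan0; apply: (linF [::] [::]).
by rewrite !teval_deltanS; apply: IH; apply: mlinear_tmap_first rdelta_tlinear _.
Qed.

Lemma rdelta_coassoc F x : mlinear 3 F ->
  teval (fun s => teval (fun q => F (q ++ behead s)) (rdelta (head 0 s))) (rdelta x) =
  teval (fun s => teval (fun q => F (head 0 s :: q)) (rdelta (nth 0 s 1))) (rdelta x).
Proof.
move=> linF; have := teq_teval linF (Delta_coassoc x).
rewrite (teval_tmap_first (m := 2) (n := 1)) (teval_tmap_second (m := 2)) => coassoc.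
under eq_teval => s _ do rewrite teval_rdelta.
under [RHS]eq_teval => s _ do rewrite teval_rdelta.
rewrite !teval_rdelta !tevalB /= coassoc.
rewrite teval_Delta_one; last by apply: mlinear_catr; rewrite addn1.
rewrite teval_Delta_one; last by apply: (mlinear_catl (w := [:: x])).
set T := teval _ (Delta x).
have -> : teval (fun s => F [:: head 0 s, one & behead s]) (Delta x) =
          teval (fun s => F [:: head 0 s; one; nth 0 s 1]) (Delta x).
  by apply: eq_teval => s /(size2E 0) ->.
have -> : teval (fun s => F [:: one, head 0 s & behead s]) (Delta x) =
          teval (fun s => F (one :: s)) (Delta x).
  by apply: eq_teval => s /(size2E 0) ->.
have -> : teval (fun s => F (s ++ [:: one])) (Delta x) =
          teval (fun s => F [:: head 0 s; nth 0 s 1; one]) (Delta x).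
  by apply: eq_teval => s /(size2E 0) ->.
set A := teval _ (Delta x); set B := teval _ (Delta x); set C := teval _ (Delta x).
(* Both sides are T - A - B - C + F(x,1,1) + F(1,x,1) + F(1,1,x). *)
rewrite !opprD !opprK !addrA /= !subrK; congr (_ + _ + _).
by rewrite [RHS]addrAC (addrAC T (- C)) (addrAC (T - A) (- C)).
Qed.

Lemma teval_deltanS_last n F x : mlinear n.+2 F ->
  teval F (deltan n.+1 x) =
  teval (fun s => teval (fun q => F (take n s ++ q)) (rdelta (nth 0 s n))) (deltan n x).
Proof.
elim: n F => [|[|n] IH] F linF.
- by rewrite teval_deltanS !teval_deltan0; apply: eq_teval => s _; rewrite cats0.
- rewrite !teval_deltanS !teval_deltan0.
  transitivity (teval (fun s => teval (fun q => F (q ++ behead s)) (rdelta (head 0 s)))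
                      (rdelta x)).
    by apply: eq_teval => s _ /=; rewrite cats0.
  by rewrite rdelta_coassoc //; apply: eq_teval => s /(size2E 0) ->.
rewrite teval_deltanS IH; last exact: mlinear_tmap_first rdelta_tlinear _.
rewrite [RHS]teval_deltanS; apply: eq_teval => -[//|a s] _ /=.
rewrite teval_exchange; apply: eq_teval => q /(size2E 0) ->.
by apply: eq_teval => r _; rewrite catA.
Qed.

Lemma teval_deltanS_rdelta (V : lmodType K) n (F : seq H -> V) z :
  teval F (deltan n.+1 z) =
  teval (fun s => teval (fun t => F (t ++ [:: nth 0 s 1])) (deltan n (nth 0 s 0))) (rdelta z).
Proof.
elim: n F => [|n IH] F.
  rewrite teval_deltanS teval_deltan0.
  by apply: eq_teval => s /(size2E 0) ->; rewrite teval_deltan0.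
rewrite teval_deltanS IH; apply: eq_teval => s _; rewrite teval_deltanS.
by apply: eq_teval => -[//|a t] _ /=; apply: eq_teval => q _; rewrite catA.
Qed.

Hypothesis eps_one : eps one = 1.

Lemma teval_rdelta_counitl z :
  teval (fun s => eps (nth 0 s 0) *: nth 0 s 1) (rdelta z) = - (eps z *: one).
Proof. by rewrite teval_rdelta counitl /= eps_one scale1r addrAC subrr sub0r. Qed.

Lemma teval_rdelta_counitr z :
  teval (fun s => eps (nth 0 s 1) *: nth 0 s 0) (rdelta z) = - (eps z *: one).
Proof. by rewrite teval_rdelta counitr /= eps_one scale1r subrr sub0r. Qed.

Lemma teval_deltan_counit_last n G x : eps x = 0 -> mlinear n G ->
  teval (fun s => eps (nth 0 s n) *: G (take n s)) (deltan n x) = 0.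
Proof.
move=> x0; elim: n G => [|[|n] IH] G linG.
- by rewrite teval_deltan0 /= x0 scale0r.
- have linG1 : linear (fun y => G [:: y]) := linG [::] [::] erefl.
  rewrite teval_deltanS teval_deltan0 /=.
  transitivity (G [:: teval (fun s => eps (nth 0 s 1) *: nth 0 s 0) (rdelta x)]).
    rewrite (linear_teval _ _ linG1); apply: eq_teval => s /(size2E 0) -> /=.
    by rewrite (linZ linG1).
  by rewrite teval_rdelta_counitr x0 scale0r oppr0 (lin0 linG1).
- rewrite teval_deltanS.
  rewrite -[RHS](IH (fun w => teval (fun q => G (q ++ behead w)) (rdelta (head 0 w)))).
    apply: eq_teval => -[//|a s] _ /=; rewrite -tevalZ.
    by apply: eq_teval => q /(size2E 0) ->.
  exact: mlinear_tmap_first rdelta_tlinear _.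
Qed.

(** * The map e *)

Definition lcomb (s : seq H) : H := foldl mul (head 0 s) (behead s).
Definition rcomb (s : seq H) : H := combr mul (head 0 s) (behead s).

Definition e_partial M w := \sum_(0 <= i < M) (-1) ^+ i *: teval lcomb (deltan i w).

Definition proj y := y - eps y *: one.

Lemma eps_proj y : eps (proj y) = 0.
Proof. by rewrite /proj (linB eps_scalar) (linZ eps_scalar) /= eps_one mulr1 subrr. Qed.

Lemma proj_linear : linear proj.
Proof.
apply: linear_sub => // a u v.
by rewrite eps_scalar scalerDl scalerA.
Qed.

Lemma proj_decomp y : y = eps y *: one + proj y.
Proof. by rewrite addrC subrK. Qed.

Lemma teval_rdelta_proj F y : mlinear 2 F ->
  teval F (rdelta (proj y)) = teval F (rdelta y) + eps y *: F [:: one; one].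
Proof.
move=> linF; rewrite /proj -scaleNr addrC (rdelta_tlinear linF) teval_rdelta_one //.
by rewrite scaleNr scalerN opprK addrC.
Qed.

Lemma linear_foldl s : linear (fun x => foldl mul x s).
Proof. by elim: s => [|y s IH] a u v //=; rewrite mul_linl IH. Qed.

Lemma mlinear_lcomb n : mlinear n lcomb.
Proof.
move=> [|h s1] s2 _ a u v; first exact: linear_foldl.
by rewrite /lcomb /= !foldl_cat /= mul_linr linear_foldl.
Qed.

Lemma lcomb_rcons s y : s != [::] -> lcomb (rcons s y) = mul (lcomb s) y.
Proof. by case: s => // a s _; rewrite /lcomb /= foldl_rcons. Qed.

Lemma e_partial_linear M : linear (e_partial M).
Proof.
move=> a u v; rewrite /e_partial scaler_sumr -big_split; apply: eq_bigr => i _ /=.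
by rewrite (deltan_tlinear (mlinear_lcomb (n := i.+1))) scalerDr !scalerA mulrC.
Qed.

Lemma e_partialS M z :
  e_partial M.+1 z = z - teval (fun s => mul (e_partial M (nth 0 s 0)) (nth 0 s 1)) (rdelta z).
Proof.
rewrite /e_partial big_nat_recl // expr0 scale1r teval_deltan0; congr (_ + _).
under eq_teval => s _ do rewrite (lin_sum (mul_linl _)).
rewrite teval_sum -sumrN; apply: eq_bigr => i _.
rewrite teval_deltanS_rdelta exprS mulN1r scaleNr -tevalZ; congr (- _).
apply: eq_teval => s _; rewrite (linZ (mul_linl _)) (linear_teval _ _ (mul_linl _)) /=.
congr (_ *: _); apply: eq_teval => t szt.
by rewrite cats1 lcomb_rcons // -size_eq0 szt.
Qed.

Variable e : H -> H.
Hypothesis e_def : is_e mul one Delta eps e.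

Definition e_ext y := e (proj y).

Lemma e_eventually w : eps w = 0 -> exists N, forall M, (N <= M)%N -> e w = e_partial M.+1 w.
Proof.
move=> w0; have [N eN] := e_def w0; exists N => M leNM; rewrite (eN M leNM) /e_partial.
rewrite [RHS]big_nat_recl // expr0 scale1r teval_deltan0 big_add1 /=; congr (_ + _).
apply: eq_bigr => i _; congr (_ *: _); apply: tev_teval => t.
by rewrite /omega_l /thead (tnth_nth 0) nth0.
Qed.

Lemma e_linear_ker a u v : eps u = 0 -> eps v = 0 -> e (a *: u + v) = a *: e u + e v.
Proof.
move=> u0 v0; have uv0 : eps (a *: u + v) = 0 by rewrite eps_scalar u0 v0 mulr0 addr0.
have [Nu eu] := e_eventually u0; have [Nv ev] := e_eventually v0.
have [Nuv euv] := e_eventually uv0.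
pose M := maxn Nu (maxn Nv Nuv).
have [leNuM leNvM leNuvM] : [/\ Nu <= M, Nv <= M & Nuv <= M]%N.
  by rewrite !leq_max !leqnn !orbT.
by rewrite (eu M leNuM) (ev M leNvM) (euv M leNuvM) e_partial_linear.
Qed.

Lemma e_ext_linear : linear e_ext.
Proof. by move=> a u v; rewrite /e_ext proj_linear e_linear_ker ?eps_proj. Qed.

Lemma e_recursion z : eps z = 0 ->
  z = e z + teval (fun s => mul (e_ext (nth 0 s 0)) (nth 0 s 1)) (rdelta z).
Proof.
move=> z0; have [Nz ez] := e_eventually z0.
have [Ns es] := eventually_in (s := rdelta z)
  (Q := fun p M => e (proj (nth 0 p.2 0)) = e_partial M.+1 (proj (nth 0 p.2 0)))
  (fun p _ => e_eventually (eps_proj _)).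
pose M := maxn Nz Ns; pose E1 := e_partial M.+1 one.
have counit_vanish :
    teval (fun s => eps (nth 0 s 0) *: mul E1 (nth 0 s 1)) (rdelta z) = 0.
  transitivity (mul E1 (teval (fun s => eps (nth 0 s 0) *: nth 0 s 1) (rdelta z))).
    by rewrite (linear_teval _ _ (mul_linr _)); apply: eq_teval => s _; rewrite (linZ (mul_linr _)).
  by rewrite teval_rdelta_counitl z0 scale0r oppr0 (lin0 (mul_linr _)).
rewrite (ez M.+1) ?leqW ?leq_maxl // e_partialS.
set T := teval _ (rdelta z).
suff -> : T = teval (fun s => mul (e_ext (nth 0 s 0)) (nth 0 s 1)) (rdelta z) by rewrite subrK.
rewrite -[RHS]addr0 -[X in _ + X]counit_vanish -tevalD; apply: eq_in_teval => p pz.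
rewrite [in LHS](proj_decomp (nth 0 p.2 0)) e_partial_linear (mul_linl _).
by rewrite -(es p pz M) ?leq_maxr // addrC.
Qed.

(** * The right-comb expansion *)

Fixpoint remainder (s : seq H) : H :=
  match s with
  | [::] => 0
  | [:: y] => y
  | y :: s' => mul (e_ext y) (remainder s')
  end.

Lemma remainder_cons y s : s != [::] -> remainder (y :: s) = mul (e_ext y) (remainder s).
Proof. by case: s. Qed.

Lemma rcomb_cons y s : s != [::] -> rcomb (y :: s) = mul y (rcomb s).
Proof. by case: s. Qed.

Lemma mlinear_remainder n : mlinear n remainder.
Proof.
move=> s1 s2 _ a u v; elim: s1 => [|y s1 IH].
  by case: s2 => [|z s2] //=; rewrite e_ext_linear mul_linl.
by rewrite !cat_cons !remainder_cons ?IH ?mul_linr //; case: s1 {IH}.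
Qed.

Lemma mlinear_rcomb_e_ext n : mlinear n (fun s => rcomb (map e_ext s)).
Proof.
move=> s1 s2 _ a u v; elim: s1 => [|y s1 IH].
  by case: s2 => [|z s2]; rewrite /rcomb /= e_ext_linear ?mul_linl.
by rewrite !cat_cons !map_cons !rcomb_cons ?IH ?mul_linr //; case: s1 {IH}.
Qed.

Lemma remainder_rcons_e_ext w y : remainder (rcons w (e_ext y)) = rcomb (map e_ext (rcons w y)).
Proof.
elim: w => [//|z w IH].
by rewrite rcons_cons map_cons remainder_cons ?IH ?rcomb_cons // -size_eq0 ?size_map size_rcons.
Qed.

Lemma remainder_rcons_mul w y z :
  remainder (rcons w (mul (e_ext y) z)) = remainder (w ++ [:: y; z]).
Proof.
elim: w => [//|u w IH].
by rewrite rcons_cons cat_cons !remainder_cons ?IH //; case: w {IH}.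
Qed.

Lemma remainder_rcons w y :
  remainder (rcons w y) =
  rcomb (map e_ext (rcons w y)) + teval (fun q => remainder (w ++ q)) (rdelta y)
  + eps y *: (remainder (w ++ [:: one]) + remainder (w ++ [:: one; one])).
Proof.
have lin_last : linear (fun u => remainder (rcons w u)).
  by move=> a u v; rewrite -!cats1; apply: (mlinear_remainder (n := (size w).+1)); rewrite addn1.
have := e_recursion (eps_proj y); rewrite -/(e_ext y) => proj_rec.
rewrite {1}(proj_decomp y) lin_last proj_rec (linD lin_last) remainder_rcons_e_ext.
rewrite (linear_teval _ _ lin_last).
under eq_teval => q szq do rewrite remainder_rcons_mul -(size2E 0 szq).
rewrite teval_rdelta_proj; last by apply: mlinear_catl; apply: mlinear_remainder.
by rewrite cats1 scalerDr addrCA -addrA; congr (_ + _); rewrite addrCA.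
Qed.

Lemma remainder_step n x : eps x = 0 ->
  teval remainder (deltan n x) =
  teval (fun s => rcomb (map e_ext s)) (deltan n x) + teval remainder (deltan n.+1 x).
Proof.
move=> x0; have mlinear_prefix t : mlinear n (fun w => remainder (w ++ t)).
  by apply: mlinear_catr; apply: mlinear_remainder.
transitivity (teval (fun s => rcomb (map e_ext s)
    + teval (fun q => remainder (take n s ++ q)) (rdelta (nth 0 s n))
    + (eps (nth 0 s n) *: remainder (take n s ++ [:: one])
       + eps (nth 0 s n) *: remainder (take n s ++ [:: one; one]))) (deltan n x)).
  apply: eq_teval => s szs.
  have def_s : s = rcons (take n s) (nth 0 s n) by rewrite -take_nth ?szs // take_oversize ?szs.
  by rewrite {1}def_s remainder_rcons -def_s scalerDr.
rewrite !tevalD (teval_deltan_counit_last x0 (mlinear_prefix [:: one])).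
rewrite (teval_deltan_counit_last x0 (mlinear_prefix [:: one; one])) !addr0.
by rewrite (teval_deltanS_last x (mlinear_remainder (n := n.+2))).
Qed.

Lemma remainder_expansion N x : eps x = 0 ->
  x = \sum_(0 <= n < N) teval (fun s => rcomb (map e_ext s)) (deltan n x)
      + teval remainder (deltan N x).
Proof.
move=> x0; elim: N => [|N IH]; first by rewrite big_nil add0r teval_deltan0.
by rewrite big_nat_recr //= -addrA -remainder_step.
Qed.

Lemma connected_expansion x : eps x = 0 ->
  (exists N, forall n, (N <= n)%N -> teq (deltan n x) [::]) ->
  let term n := tev (@omega_r K H mul n) (tmapall e_ext (deltan n x)) in
  exists N, (forall n, (N <= n)%N -> term n = 0) /\ x = \sum_(0 <= n < N) term n.
Proof.
move=> x0 [N vanish] term.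
have termE n : term n = teval (fun s => rcomb (map e_ext s)) (deltan n x).
  rewrite /term (tev_teval (F := rcomb)) ?teval_tmapall // => t.
  by rewrite /omega_r /rcomb /thead (tnth_nth 0) nth0.
exists N; split=> [n leNn|].
  by rewrite termE (teq_teval (mlinear_rcomb_e_ext (n := n.+1)) (vanish n leNn)) teval_nil.
rewrite {1}(remainder_expansion N x0).
rewrite (teq_teval (mlinear_remainder (n := N.+1)) (vanish N (leqnn N))).
by rewrite teval_nil addr0; apply: eq_bigr => n _; rewrite termE.
Qed.

End Bialgebra.

Unset Implicit Arguments.
Set Strict Implicit.

(* e^{(x)(n+1)} is applied to delta^n(x), an element of ker(eps)^{(x)(n+1)},
   through the linear extension  y |-> e (y - eps(y) 1)  of e to H. *)
Theorem lemma4p3 (K : fieldType) (H : lmodType K) (mul : H -> H -> H)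
  (one : H) (Delta : H -> tens H 2) (eps : H -> K)
  (HB : AscMag_bialgebra mul one Delta eps)
  (Hconn : connected one Delta eps)
  (e : H -> H) (He : is_e mul one Delta eps e)
  (x : H) (Hx : eps x = 0) :
  let term n := tev (@omega_r K H mul n)
                  (tmapall (fun y => e (y - eps y *: one)) (deltan one Delta n x)) in
  exists N : nat, (forall n, (N <= n)%N -> term n = 0) /\
                  x = \sum_(0 <= n < N) term n.
Proof.
case: HB => mulDl [mulDr [mul1 [_ [Delta_lin [coassoc [eps_scalar [cu1 [cu2 [Done _]]]]]]]]].
have mul_linl z : linear (mul^~ z) by move=> a u v; apply: mulDl.
have mul_linr z : linear (mul z) by move=> a u v; apply: mulDr.
(* eps one = 1 is not an axiom: it follows from the counit unless H = 0. *)
have [one0 | one_neq0] := eqVneq one 0.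
  have H0 (h : H) : h = 0 by rewrite -(mul1 h) one0 (lin0 (mul_linl h)).
  by move=> term; exists 0%N; split=> [n _|]; [exact: H0 | rewrite big_geq ?(H0 x)].
have counitl y : teval (fun s => eps (nth 0 s 0) *: nth 0 s 1) (Delta y) = y.
  by rewrite -[RHS](cu1 y); apply/esym/tev_teval => u; rewrite !(tnth_nth 0).
have counitr y : teval (fun s => eps (nth 0 s 1) *: nth 0 s 0) (Delta y) = y.
  by rewrite -[RHS](cu2 y); apply/esym/tev_teval => u; rewrite !(tnth_nth 0).
have eps1 := counit_one eps_scalar counitl Done one_neq0.
exact: (connected_expansion mul_linl mul_linr Delta_lin coassoc eps_scalar counitl counitr
          Done eps1 He Hx (Hconn x Hx)).
Qed.
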